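(* Let $n$ be a positive integer with $n \equiv 1 \pmod{3}$, let $a = (n(n+1)-2)/3$, and let $\sigma$ be a permutation of $\mathbb{Z}_n = \{0,\dots,n-1\}$ such that $f_\sigma(\delta) \in \{a, a+2\}$ for every $\delta \in \{1,\dots,n-1\}$ (a near-perfect permutation). Then the Latin square $L$ defined by $L[i][j] = (i + \sigma^{-1}(j)) \bmod n$ for $i,j \in \{0,\dots,n-1\}$ satisfies $$I(L) = \frac{4n(n-1)}{9}.$$
   Context: For a permutation $\sigma$ of $\mathbb{Z}_n$, the shift correlation at shift $\delta$ is $f_\sigma(\delta) = \sum_{j=0}^{n-1} \lvert \sigma((j+\delta) \bmod n) - \sigma(j) \rvert$, where $\sigma$ takes values in $\{0,\dots,n-1\}$ and the absolute value is of ordinary integers. For an $n\times n$ Latin square $L$ (each symbol of $\{0,\dots,n-1\}$ occurring exactly once in each row and column; rows and columns indexed by $\{0,\dots,n-1\}$), $\mathrm{pos}(r,s)$ is the column containing symbol $s$ in row $r$, $d(r_1,r_2) = \sum_{s=0}^{n-1} \lvert \mathrm{pos}(r_1,s) - \mathrm{pos}(r_2,s)\rvert$, and the imbalance is $I(L) = \frac{1}{3} \sum_{0 \le r_1 < r_2 \le n-1} \lvert 3\, d(r_1,r_2) - n(n+1) \rvert$. *)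

From mathcomp Require Import all_boot all_order all_fingroup all_algebra.
Set Implicit Arguments. Unset Strict Implicit. Unset Printing Implicit Defensive.
Import Order.TTheory GRing.Theory Num.Theory.

Definition addmod (n : nat) (j : 'I_n) (d : nat) : 'I_n :=
  Ordinal (ltn_pmod (j + d) (leq_ltn_trans (leq0n j) (ltn_ord j))).

Definition shift_corr (n : nat) (s : {perm 'I_n}) (delta : nat) : nat :=
  \sum_(j < n) absz (Posz (val (s (addmod j delta))) - Posz (val (s j))).

(* a Latin square as a function rows -> columns -> symbols *)
Definition is_latin (n : nat) (L : 'I_n -> 'I_n -> 'I_n) : Prop :=
  (forall r, injective (L r)) /\ (forall c, injective (fun r => L r c)).

Definition pos (n : nat) (L : 'I_n -> 'I_n -> 'I_n) (r s : 'I_n) : nat :=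
  odflt 0 (omap (@nat_of_ord n) [pick c | L r c == s]).

Definition dist_rows (n : nat) (L : 'I_n -> 'I_n -> 'I_n) (r1 r2 : 'I_n) : nat :=
  (\sum_(s < n) absz (Posz (pos L r1 s) - Posz (pos L r2 s)))%N.

Definition imbalance (n : nat) (L : 'I_n -> 'I_n -> 'I_n) : rat :=
  ((3%:R)^-1 * \sum_(r1 < n) \sum_(r2 < n | (r1 < r2)%N)
     `|(((3 * dist_rows L r1 r2)%N)%:R - ((n * (n + 1))%N)%:R : rat)|%R)%R.

Definition latin_of_perm (n : nat) (s : {perm 'I_n}) : 'I_n -> 'I_n -> 'I_n :=
  fun i j => addmod i (val ((s^-1)%g j)).

From mathcomp Require Import all_boot all_order all_fingroup all_algebra.
From mathcomp Require Import zify ring.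
Import Order.TTheory GRing.Theory Num.Theory.
Set Implicit Arguments. Unset Strict Implicit. Unset Printing Implicit Defensive.

(* For L[i][j] = i + sigma^-1(j), the distance between rows r1 < r2 equals
   f_sigma(r2 - r1), so near-perfectness makes every term 3 d - n(n+1) of the
   imbalance equal to -2 or 4.  On these two values |x| = (x + 8) / 3, so the
   imbalance is an affine function of the total row distance, and the latter
   is the same for every Latin square: the columns holding a fixed symbol run
   through 0, ..., n-1, contributing sum_(i,j) |i - j| = (n-1) n (n+1) / 3. *)

Section Addmod.
Variable n : nat.
Implicit Types (i j : 'I_n) (d e : nat).

Lemma addmodA j d e : addmod (addmod j d) e = addmod j (d + e).
Proof. by apply: val_inj; rewrite /= modnDml addnA. Qed.

Lemma addmodDn j d : addmod j (d + n) = addmod j d.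
Proof. by apply: val_inj; rewrite /= addnA modnDr. Qed.

Lemma addmod0 j : addmod j 0 = j.
Proof. by apply: val_inj; rewrite /= addn0 modn_small. Qed.

Lemma addmodn j : addmod j n = j.
Proof. by have := addmodDn j 0; rewrite add0n addmod0. Qed.

Lemma addmodC i j : addmod i j = addmod j i.
Proof. by apply: val_inj; rewrite /= addnC. Qed.

Lemma addmod_inj d : injective (fun j : 'I_n => addmod j d).
Proof.
move=> i j /(congr1 val) /= /eqP; rewrite eqn_modDr !modn_small //.
by move=> /eqP; apply: val_inj.
Qed.

End Addmod.

Lemma sum_distn_ord n : 3 * \sum_(i < n) \sum_(j < n) `|i - j| = n.-1 * n * n.+1.
Proof.
have last_col m : 2 * \sum_(i < m) `|i - m| = m * m.+1.
  elim: m => [|m IHm]; first by rewrite big_ord0.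
  rewrite big_ord_recr /= distnS.
  have -> : \sum_(i < m) `|widen_ord (leqnSn m) i - m.+1|
            = \sum_(i < m) (`|i - m| + 1).
    by apply: eq_bigr => i _ /=; have := ltn_ord i; lia.
  rewrite big_split /= sum1_card card_ord.
  by move: IHm; set S := \sum_(i < m) _; lia.
elim: n => [|n IHn]; first by rewrite big_ord0.
rewrite big_ord_recr /=; under eq_bigr => i _ do rewrite big_ord_recr /=.
rewrite big_split /= big_ord_recr /= distnn addn0.
have -> : \sum_(i < n) `|n - i| = \sum_(i < n) `|i - n|.
  by apply: eq_bigr => i _; rewrite distnC.
have := last_col n; move: IHn; set A := \sum_(i < n) _; set B := \sum_(i < n) _.
by case: n A B => [|n] A B; nia.
Qed.

Lemma sum_pairs_sym (V : nmodType) n (G : 'I_n -> 'I_n -> V) :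
  (forall i j, G i j = G j i) ->
  (\sum_(i < n) \sum_(j < n) G i j
   = (\sum_(i < n) \sum_(j < n | (i < j)%N) G i j) *+ 2 + \sum_(i < n) G i i)%R.
Proof.
move=> GC.
have splitE i : (\sum_(j < n) G i j = \sum_(j < n | (i < j)%N) G i j
                  + \sum_(j < n | (j < i)%N) G i j + G i i)%R.
  rewrite (bigID (fun j : 'I_n => i < j)) /= -addrA; congr (_ + _)%R.
  rewrite (bigD1 i) ?ltnn //= addrC; congr (_ + _)%R.
  by apply: eq_bigl => j; rewrite -leqNgt ltn_neqAle andbC.
have swapE : (\sum_(i < n) \sum_(j < n | (j < i)%N) G i j
              = \sum_(i < n) \sum_(j < n | (i < j)%N) G i j)%R.
  under eq_bigr do rewrite big_mkcond; rewrite exchange_big.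
  by apply: eq_bigr => i _; rewrite [RHS]big_mkcond; apply: eq_bigr => j _; rewrite GC.
under eq_bigr do rewrite splitE.
by rewrite !big_split /= swapE mulr2n.
Qed.

Section RowDistances.
Variables (n : nat) (L : 'I_n -> 'I_n -> 'I_n).

Lemma pos_latin r c : injective (L r) -> pos L r (L r c) = c.
Proof.
move=> injLr; rewrite /pos; case: pickP => [c' /eqP/injLr -> // | /(_ c)].
by rewrite eqxx.
Qed.

Lemma dist_rowsC r1 r2 : dist_rows L r1 r2 = dist_rows L r2 r1.
Proof. by apply: eq_bigr => x _; rewrite distnC. Qed.

Lemma dist_rowsxx r : dist_rows L r r = 0.
Proof. by rewrite /dist_rows big1 // => x _; rewrite distnn. Qed.

Lemma sum_dist_rows_latin : is_latin L ->
  3 * \sum_r1 \sum_r2 dist_rows L r1 r2 = n * (n.-1 * n * n.+1).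
Proof.
case=> row_inj col_inj; rewrite /dist_rows.
under eq_bigr do rewrite exchange_big; rewrite exchange_big big_distrr /=.
rewrite -[n in n * _]card_ord -sum_nat_const; apply: eq_bigr => x _.
pose col r := invF (row_inj r) x.
have posE r : pos L r x = col r.
  by rewrite -[x in pos _ _ x](f_invF (row_inj r)) pos_latin.
have inj_col : injective col.
  by move=> r r' eq_col; apply: (col_inj (col r)); rewrite /= {2}eq_col !f_invF.
rewrite -sum_distn_ord; congr (3 * _); rewrite [RHS](reindex_inj inj_col).
apply: eq_bigr => r1 _; rewrite [RHS](reindex_inj inj_col).
by apply: eq_bigr => r2 _; rewrite !posE.
Qed.

End RowDistances.

Section LatinOfPerm.
Variables (n : nat) (s : {perm 'I_n}).

Lemma latin_of_permE r x : latin_of_perm s r (s (addmod x (n - r))) = x.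
Proof.
by rewrite /latin_of_perm permK addmodC addmodA subnK ?addmodn // ltnW.
Qed.

Lemma latin_of_perm_is_latin : is_latin (latin_of_perm s).
Proof.
split=> [r c c' | c r r'] /=; rewrite /latin_of_perm; last exact: addmod_inj.
by rewrite ![addmod r _]addmodC => /addmod_inj/perm_inj.
Qed.

Lemma pos_latin_of_perm r x : pos (latin_of_perm s) r x = s (addmod x (n - r)).
Proof.
rewrite -{1}(latin_of_permE r x) pos_latin //.
by case: latin_of_perm_is_latin.
Qed.

Lemma dist_rows_latin_of_perm (r1 r2 : 'I_n) : r1 <= r2 ->
  dist_rows (latin_of_perm s) r1 r2 = shift_corr s (r2 - r1).
Proof.
move=> le_r12; rewrite /dist_rows (reindex_inj (@addmod_inj n r2)).
apply: eq_bigr => j _; rewrite !pos_latin_of_perm !addmodA.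
rewrite subnKC ?addmodn; last exact: ltnW.
have -> : r2 + (n - r1) = r2 - r1 + n by have := ltn_ord r1; lia.
by rewrite addmodDn.
Qed.

End LatinOfPerm.

Lemma imbalance_near_perfect n (L : 'I_n -> 'I_n -> 'I_n) : is_latin L ->
  (forall r1 r2 : 'I_n, r1 < r2 ->
     3 * dist_rows L r1 r2 + 2 = n * (n + 1) \/
     3 * dist_rows L r1 r2 = n * (n + 1) + 4) ->
  imbalance L = ((4 * n * (n - 1))%:R / 9%:R)%R.
Proof.
move=> latL near.
pose c : rat := (8%:R - (n * (n + 1))%N%:R)%R.
pose G r1 r2 : rat := ((3 * dist_rows L r1 r2)%N%:R + c)%R.
have normE (r1 r2 : 'I_n) : r1 < r2 ->
    (`|(3 * dist_rows L r1 r2)%N%:R - (n * (n + 1))%N%:R| = G r1 r2 / 3%:R :> rat)%R.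
  rewrite /G /c => /near[] dE.
  - by rewrite -dE natrD opprD addrA subrr sub0r normrN normr_nat; field.
  - by rewrite dE natrD addrAC subrr add0r normr_nat; field.
have pairsE : ((\sum_(r1 < n) \sum_(r2 < n | (r1 < r2)%N) G r1 r2) *+ 2
    = (n * (n.-1 * n * n.+1))%N%:R + c *+ (n * n) - c *+ n)%R.
  apply: (addIr (\sum_(i < n) G i i)%R); rewrite -sum_pairs_sym; last first.
    by move=> i j; rewrite /G dist_rowsC.
  under [in RHS]eq_bigr do rewrite /G dist_rowsxx muln0 add0r.
  rewrite sumr_const card_ord subrK /G.
  under eq_bigr do rewrite big_split /= sumr_const card_ord.
  rewrite big_split /= sumr_const card_ord -mulrnA; congr (_ + _)%R.
  rewrite -(sum_dist_rows_latin latL) big_distrr natr_sum.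
  by apply: eq_bigr => i _; rewrite big_distrr natr_sum.
rewrite /imbalance.
under eq_bigr => r1 _ do under eq_bigr => r2 lt_r12 do rewrite normE //.
under eq_bigr do rewrite -mulr_suml; rewrite -mulr_suml.
move: pairsE; set P := (\sum_(r1 < n) _)%R => pairsE.
have -> : P = (P *+ 2 / 2%:R)%R by rewrite -mulr_natr; field.
rewrite pairsE -[(c *+ (n * n))%R]mulr_natr -[(c *+ n)%R]mulr_natr /c.
case: (posnP n) => [-> | n_gt0].
  by rewrite !(mul0n, muln0, mulr0, mul0r, subrr).
by rewrite -subn1 -[n.+1]addn1 !natrM !natrD natrB //; field.
Qed.

Lemma dvdn_mul_succ_sub2 n : n %% 3 = 1 -> 3 %| n * (n + 1) - 2.
Proof.
move=> n_mod3; have := divn_eq n 3; rewrite n_mod3; move: (n %/ 3) => q ->.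
by apply/dvdnP; exists (q * (3 * q + 3)); nia.
Qed.

Theorem proposition5 (n : nat) (Hn : 0 < n) (Hmod : n %% 3 = 1)
  (s : {perm 'I_n}) :
  (forall delta : nat, 1 <= delta <= n - 1 ->
     shift_corr s delta = (n * (n + 1) - 2) %/ 3 \/
     shift_corr s delta = (n * (n + 1) - 2) %/ 3 + 2) ->
  imbalance (latin_of_perm s) = ((4 * n * (n - 1))%:R / 9%:R)%R.
Proof.
move=> near_perfect.
apply: imbalance_near_perfect; first exact: latin_of_perm_is_latin.
have divE : 3 * ((n * (n + 1) - 2) %/ 3) + 2 = n * (n + 1).
  have two_le : 2 <= n * (n + 1) := leq_mul Hn (leq_add Hn (leqnn 1)).
  by rewrite mulnC divnK ?subnK; last exact: dvdn_mul_succ_sub2.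
move: near_perfect divE; set a := _ %/ 3 => near_perfect divE.
move=> r1 r2 lt_r12; rewrite dist_rows_latin_of_perm; last exact: ltnW.
have [] := near_perfect (r2 - r1).
- by move: (ltn_ord r2); clear -lt_r12; lia.
- by move=> ->; left.
- by move=> ->; right; rewrite -divE mulnDr -addnA.
Qed.
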